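(* Let $1\le k\le n-1$ and let $T$ be a tableau of shape $k\times(n-k)$. Then there is a unique multiset $\varphi_{NN}(T)$ of pairwise nonnesting vectors in $V^*_{k,n}$ whose summing tableau is $T$, and there is a unique multiset $\varphi_{NC}(T)$ of pairwise noncrossing vectors in $V^*_{k,n}$ whose summing tableau is $T$. (Equal vectors are considered both nonnesting and noncrossing with each other.)
   Context: $V_{k,n}$ denotes the set of integer vectors $I=(i_1,\dots,i_k)$ with $1\le i_1<\dots<i_k\le n$, and $V^*_{k,n}=V_{k,n}\setminus\{(n-k+1,\dots,n)\}$. Two arcs $(p<p')$, $(q<q')$ cross if $p<q<p'<q'$ or $q<p<q'<p'$; they nest if $p<q<q'<p'$ or $q<p<p'<q'$. $I,J\in V_{k,n}$ are noncrossing if for all $1\le a<b\le k$ with $i_\ell=j_\ell$ for all $a<\ell<b$, the arcs $(i_a<i_b)$ and $(j_a<j_b)$ do not cross; they are nonnesting if for all $1\le a<b\le k$ these arcs do not nest (equivalently $I\le J$ or $J\le I$ componentwise). A tableau of shape $k\times(n-k)$ is an array $T=(t_{a,b})_{a\in[k],b\in[n-k]}$ of nonnegative integers with $t_{a,b}\le t_{a,b+1}$ and $t_{a+1,b}\le t_{a,b}$ (rows indexed from top to bottom). The summing tableau of a finite multiset $L$ of vectors in $V_{k,n}$ is $t_{a,b}=\#\{I\in L : i_a\le a+b-1\}$ (counted with multiplicity); equivalently it is $\sum_{I\in L}\chi_I$ where $(\chi_I)_{a,b}=1$ if $i_a\le a+b-1$ and $0$ otherwise. *)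

From mathcomp Require Import all_boot.
Set Implicit Arguments. Unset Strict Implicit. Unset Printing Implicit Defensive.

(* Vectors I = (i_1,...,i_k) are represented as sequences of nats
   [:: i_1; ...; i_k] (entries 1-based values as in the paper);
   the paper's index a (1-based) corresponds to position a-1 (nth 0 I (a-1)). *)

Definition inV (k n : nat) (I : seq nat) : bool :=
  [&& size I == k, sorted ltn I & all (fun x => 0 < x <= n) I].

Definition inVstar (k n : nat) (I : seq nat) : bool :=
  inV k n I && (I != iota (n - k + 1) k).

Definition arcs_cross (p p' q q' : nat) : bool :=
  ((p < q) && (q < p') && (p' < q')) || ((q < p) && (p < q') && (q' < p')).
Definition arcs_nest (p p' q q' : nat) : bool :=
  ((p < q) && (q < q') && (q' < p')) || ((q < p) && (p < p') && (p' < q')).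

Definition noncrossing (k : nat) (I J : seq nat) : Prop :=
  forall a b, a < b -> b < k ->
    (forall l, a < l -> l < b -> nth 0 I l = nth 0 J l) ->
    ~~ arcs_cross (nth 0 I a) (nth 0 I b) (nth 0 J a) (nth 0 J b).

Definition nonnesting (k : nat) (I J : seq nat) : Prop :=
  forall a b, a < b -> b < k ->
    ~~ arcs_nest (nth 0 I a) (nth 0 I b) (nth 0 J a) (nth 0 J b).

(* Tableau of shape k x (n-k): T a b for 0-based a < k, b < n-k
   (paper's t_{a+1,b+1}); weakly increasing along rows,
   weakly decreasing down columns. Entries are nats (nonnegative). *)
Definition is_tableau (k n : nat) (T : nat -> nat -> nat) : Prop :=
  (forall a b, a < k -> b.+1 < n - k -> T a b <= T a b.+1) /\
  (forall a b, a.+1 < k -> b < n - k -> T a.+1 b <= T a b).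

(* Summing tableau of a multiset L (a seq, counted with multiplicity):
   paper t_{a,b} = #{I in L : i_a <= a+b-1}; in 0-based a,b this is
   #{I in L : nth 0 I a <= a + b + 1}. *)
Definition summing_tableau (L : seq (seq nat)) (a b : nat) : nat :=
  count (fun I => nth 0 I a <= a + b + 1) L.

Definition represents (R : seq nat -> seq nat -> Prop) (k n : nat)
    (T : nat -> nat -> nat) (L : seq (seq nat)) : Prop :=
  [/\ all (inVstar k n) L,
      (forall I J, I \in L -> J \in L -> R I J) &
      (forall a b, a < k -> b < n - k -> summing_tableau L a b = T a b)].

Definition exists_unique_multiset (P : seq (seq nat) -> Prop) : Prop :=
  exists L, P L /\ (forall L', P L' -> perm_eq L L').

From mathcomp Require Import all_boot zify.
Set Implicit Arguments. Unset Strict Implicit. Unset Printing Implicit Defensive.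

(* Two vectors are nonnesting iff they are componentwise comparable, so a
   nonnesting multiset is a chain [I^1 <= ... <= I^d] with [d = t_{1,n-k}],
   and the summing tableau forces [I^m_a] to be the least [a + b - 1] with
   [t_{a,b} >= m]; this gives both existence and uniqueness of [phi_NN(T)].

   The noncrossing case goes by induction on [k]. Dropping the last entry of
   the vectors of a noncrossing representation of [T] gives one of the
   tableau formed by the first [k-1] rows of [T], while the multiset of last
   entries is fixed by the last row. For vectors with increasing entries, the
   only noncrossing conditions involving the last entries say that prefixes
   and last entries are matched greedily: the least last entry goes to the
   colexicographically largest prefix whose own last entry is smaller. So at
   most one matching works, and the greedy one does work because Hall's
   condition for it is the column monotonicity of [T]. *)

Lemma increasing_gap (f : nat -> nat) k i j :
  (forall i j, i < j -> j < k -> f i < f j) -> i <= j -> j < k -> f i + (j - i) <= f j.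
Proof.
move=> incr_f; elim: j => [|j IH] ij jk.
  by move: ij; rewrite leqn0 => /eqP ->; rewrite addn0.
case: (ltnP i j.+1) => ij'; last first.
  by rewrite (_ : i = j.+1) ?subnn ?addn0 //; lia.
have := IH ltac:(lia) ltac:(lia); have := incr_f j j.+1 (ltnSn j) jk; lia.
Qed.

Lemma sorted_nth_leq_count (s : seq nat) j v : sorted leq s -> j < size s ->
  (nth 0 s j <= v) = (j < count (fun x => x <= v) s).
Proof.
elim: s j => [|x s IH] j //= sorted_xs js.
have x_min := order_path_min leq_trans sorted_xs.
have none_le : v < x -> count (fun y => y <= v) s = 0.
  move=> vx; apply/eqP; rewrite -leqn0 leqNgt -has_count; apply/hasPn => y sy /=.
  by have := allP x_min y sy; rewrite /=; lia.
case: j js => [|j] js /=; first by case: (leqP x v) => //= vx; rewrite none_le.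
rewrite IH ?(path_sorted sorted_xs) //.
by case: (leqP x v) => //= vx; rewrite none_le.
Qed.

Lemma eq_of_leq_thresholds x y N : x <= N -> y <= N ->
  (forall b, b < N -> (x <= b) = (y <= b)) -> x = y.
Proof.
move=> xN yN thr; apply/eqP; rewrite eqn_leq; apply/andP; split; rewrite leqNgt; apply/negP => lt.
  by have := thr y ltac:(lia); rewrite leqnn leqNgt lt.
by have := thr x ltac:(lia); rewrite leqnn leqNgt lt.
Qed.

Lemma count_leq_iota1 x d : x <= d -> count (fun m => m <= x) (iota 1 d) = x.
Proof.
move=> xd; rewrite (_ : d = x + (d - x)); last by lia.
rewrite iotaD count_cat (_ : count _ (iota _ (d - x)) = 0) ?addn0.
  apply/eqP; rewrite -[X in _ == X](size_iota 1 x) -all_count.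
  by apply/allP => y; rewrite mem_iota; lia.
by apply/eqP; rewrite -leqn0 leqNgt -has_count; apply/hasPn => y; rewrite mem_iota /=; lia.
Qed.

Lemma perm_cons_rem (T : eqType) (x : T) s t : x \in s -> perm_eq t (rem x s) ->
  perm_eq (x :: t) s.
Proof.
move=> xs ts; rewrite perm_sym; apply: perm_trans (perm_to_rem xs) _.
by rewrite perm_cons perm_sym.
Qed.

Lemma perm_count_leq (s t : seq nat) :
  (forall v, count (fun x => x <= v) s = count (fun x => x <= v) t) -> perm_eq s t.
Proof.
move=> cnt; apply/allP => x _ /=.
have cnt_split u : count (fun y => y <= x) u = count (fun y => y < x) u + count (pred1 x) u.
  by elim: u => //= y u IH; case: ltngtP => _ /=; rewrite IH ?add0n ?add1n ?addnS.
suff lt_eq : count (fun y => y < x) s = count (fun y => y < x) t.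
  by rewrite -(eqn_add2l (count (fun y => y < x) s)) -cnt_split lt_eq -cnt_split cnt.
case: x {cnt_split} => [|x]; last exact: cnt x.
have none u : count (fun y => y < 0) u = 0 by elim: u.
by rewrite !none.
Qed.

Lemma perm_map_rem (T1 T2 : eqType) (f : T1 -> T2) x s t : x \in s -> x \in t ->
  perm_eq (map f s) (map f t) -> perm_eq (map f (rem x s)) (map f (rem x t)).
Proof.
move=> xs xt st; have := perm_map f (perm_to_rem xs); rewrite perm_sym => ss.
rewrite -(perm_cons (f x)); exact: perm_trans ss (perm_trans st (perm_map f (perm_to_rem xt))).
Qed.

Lemma rcons_take_nth (I : seq nat) K : size I = K.+1 -> rcons (take K I) (nth 0 I K) = I.
Proof. by move=> sI; rewrite -take_nth ?sI // -sI take_size. Qed.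

Lemma exists_argmin (T : eqType) (f : T -> nat) (s : seq T) x0 : x0 \in s ->
  exists2 x, x \in s & forall y, y \in s -> f x <= f y.
Proof.
move=> x0s; have ex : exists m, has (fun x => f x == m) s by exists (f x0); apply/hasP; exists x0.
case: (ex_minnP ex) => m /hasP [x xs /eqP fx] min_m; exists x => // y ys.
by rewrite fx; apply: min_m; apply/hasP; exists y.
Qed.

Lemma exists_maximal (T : eqType) (R : T -> T -> Prop) (s : seq T) x0 :
  (forall x, ~ R x x) -> (forall x y z, R x y -> R y z -> R x z) ->
  (forall x y, R x y \/ ~ R x y) -> x0 \in s ->
  exists2 x, x \in s & forall y, y \in s -> ~ R x y.
Proof.
move=> irrR transR decR; elim: s x0 => [//|z s IH] x0 _.
case: s IH => [|w s] IH.
  by exists z => [|y]; rewrite ?mem_head // inE => /eqP ->.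
have [x xs x_max] := IH w (mem_head w s).
case: (decR x z) => [xz | not_xz].
  exists z => [|y]; first exact: mem_head.
  rewrite inE => /orP [/eqP -> // | ys zy]; exact: x_max ys (transR _ _ _ xz zy).
by exists x => [|y]; rewrite inE ?xs ?orbT // => /orP [/eqP -> | /x_max].
Qed.

Lemma inV_nth k n I :
  inV k n I <-> [/\ size I = k, (forall i j, i < j -> j < k -> nth 0 I i < nth 0 I j)
                  & (forall i, i < k -> 0 < nth 0 I i <= n)].
Proof.
rewrite /inV; split.
  case/and3P => /eqP sI sortI /(all_nthP 0) rangeI; split => //.
    move=> i j ij jk; rewrite -sI in jk.
    by apply: (sorted_ltn_nth ltn_trans) => //; rewrite inE //; exact: ltn_trans jk.
  by move=> i ik; apply: rangeI; rewrite sI.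
case=> sI incrI rangeI; apply/and3P; split; first by rewrite sI.
  by apply/(sortedP 0) => i hi; apply: incrI; rewrite -?sI.
by apply/(all_nthP 0) => i hi; apply: rangeI; rewrite -sI.
Qed.

Lemma inV_nth_bounds k n I a : inV k n I -> a < k -> a < nth 0 I a <= n - k + a + 1.
Proof.
case/inV_nth => _ incrI rangeI ak.
have := increasing_gap incrI (leq0n a) ak.
have := increasing_gap incrI (_ : a <= k.-1) (_ : k.-1 < k).
have := rangeI 0; have := rangeI k.-1; lia.
Qed.

Lemma inVstar_head k n I : 0 < k -> inVstar k n I -> nth 0 I 0 <= n - k.
Proof.
move=> k_gt0 /andP [VI notmax]; rewrite leqNgt; apply: contra notmax => head_big.
have [sI incrI _] := (inV_nth k n I).1 VI.
apply/eqP/(@eq_from_nth _ 0); first by rewrite size_iota.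
move=> i; rewrite sI => ik; rewrite nth_iota //.
have := increasing_gap incrI (leq0n i) ik; have := inV_nth_bounds VI ik; lia.
Qed.

Section Tableau.

Variables (k n : nat) (T : nat -> nat -> nat).
Hypothesis tabT : is_tableau k n T.

Lemma tableau_row_mono a b b' : a < k -> b <= b' -> b' < n - k -> T a b <= T a b'.
Proof.
case: tabT => rowT _ ak; elim: b' => [|b' IH] bb' b'N.
  by move: bb'; rewrite leqn0 => /eqP ->.
case: (ltnP b b'.+1) => bb''; last by rewrite (_ : b = b'.+1) //; lia.
have := IH ltac:(lia) ltac:(lia); have := rowT a b' ak b'N; lia.
Qed.

Lemma tableau_col_mono a a' b : a <= a' -> a' < k -> b < n - k -> T a' b <= T a b.
Proof.
case: tabT => _ colT; elim: a' => [|a' IH] aa' a'k bN.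
  by move: aa'; rewrite leqn0 => /eqP ->.
case: (ltnP a a'.+1) => aa''; last by rewrite (_ : a = a'.+1) //; lia.
have := IH ltac:(lia) ltac:(lia) bN; have := colT a' b a'k bN; lia.
Qed.

Lemma tableau_le_corner a b : a < k -> b < n - k -> T a b <= T 0 (n - k - 1).
Proof.
move=> ak bN; have lastN : n - k - 1 < n - k by lia.
apply: leq_trans (tableau_row_mono ak (_ : b <= n - k - 1) lastN) _; first by lia.
exact: tableau_col_mono (leq0n a) ak lastN.
Qed.

End Tableau.

(* Row [a] of a summing tableau, extended to every threshold [v]: entry [i_a]
   lies in [a+1, a+(n-k)+1], so below that window no vector counts and above
   it all [d] of them do. *)
Definition row_count (T : nat -> nat -> nat) (N d a v : nat) : nat :=
  if v <= a then 0 else if v - a.+1 < N then T a (v - a.+1) else d.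

Section Represents.

Variables (R : seq nat -> seq nat -> Prop) (k n : nat) (T : nat -> nat -> nat).
Variable L : seq (seq nat).
Hypothesis repL : represents R k n T L.

Lemma represents_count_nth_le a v : a < k ->
  count (fun I => nth 0 I a <= v) L = row_count T (n - k) (size L) a v.
Proof.
case: repL => /allP inL _ sumL ak; rewrite /row_count.
have bounds I : I \in L -> a < nth 0 I a <= n - k + a + 1.
  by case/inL/andP => VI _; exact: inV_nth_bounds VI ak.
case: ifP => va.
  apply/eqP; rewrite -leqn0 leqNgt -has_count.
  by apply/hasPn => I /bounds; rewrite /= -ltnNge; lia.
case: ifP => vN.
  rewrite -sumL // /summing_tableau; apply: eq_count => I /=.
  by rewrite (_ : a + (v - a.+1) + 1 = v) //; lia.
by apply/eqP; rewrite -all_count; apply/allP => I /bounds /=; lia.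
Qed.

Lemma size_represents : 0 < k -> k < n -> size L = T 0 (n - k - 1).
Proof.
case: repL => /allP inL _ sumL k_gt0 kn; rewrite -sumL; try lia.
apply/esym/eqP; rewrite /summing_tableau -all_count; apply/allP => I /inL VI /=.
have := inVstar_head k_gt0 VI; lia.
Qed.

End Represents.

Lemma represents_perm R k n T L L' : perm_eq L L' ->
  represents R k n T L -> represents R k n T L'.
Proof.
move=> LL' [inL RL sumL]; split.
- by rewrite -(perm_all _ LL').
- by move=> I J; rewrite -!(perm_mem LL'); exact: RL.
- by move=> a b ak bN; rewrite -sumL // /summing_tableau (permP LL').
Qed.

Lemma represents_nth_perm R R' k n T L L' a : 0 < k -> k < n -> a < k ->
  represents R k n T L -> represents R' k n T L' ->
  perm_eq (map (nth 0 ^~ a) L) (map (nth 0 ^~ a) L').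
Proof.
move=> k_gt0 kn ak repL repL'; apply: perm_count_leq => v; rewrite !count_map.
rewrite (represents_count_nth_le repL) // (represents_count_nth_le repL') //.
by rewrite (size_represents repL) // (size_represents repL').
Qed.

(** * The nonnesting representation *)

Definition least_col (T : nat -> nat -> nat) (N a m : nat) : nat :=
  find (fun b => m <= T a b) (iota 0 N).

Definition nn_vec (T : nat -> nat -> nat) (N k m : nat) : seq nat :=
  mkseq (fun a => a.+1 + least_col T N a m) k.

Definition phiNN (T : nat -> nat -> nat) (k n : nat) : seq (seq nat) :=
  [seq nn_vec T (n - k) k m | m <- iota 1 (T 0 (n - k - 1))].

Lemma least_col_le_width T N a m : least_col T N a m <= N.
Proof. by rewrite /least_col -[X in _ <= X](size_iota 0 N) find_size. Qed.

Definition leq_cw k (I J : seq nat) : bool := all (fun a => nth 0 I a <= nth 0 J a) (iota 0 k).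

Lemma leq_cwP k I J : reflect (forall a, a < k -> nth 0 I a <= nth 0 J a) (leq_cw k I J).
Proof.
apply: (iffP allP) => [IJ a ak | IJ a]; first by apply: IJ; rewrite mem_iota.
by rewrite mem_iota => /IJ.
Qed.

Section Nonnesting.

Variables (k n : nat) (T : nat -> nat -> nat).
Hypothesis tabT : is_tableau k n T.

Lemma least_col_leE a m b : a < k -> b < n - k ->
  (least_col T (n - k) a m <= b) = (m <= T a b).
Proof.
move=> ak bN; apply/idP/idP => [lcb | mT].
  have lcN : least_col T (n - k) a m < size (iota 0 (n - k)) by rewrite size_iota; lia.
  move: (lcN); rewrite -has_find => /(nth_find 0).
  rewrite nth_iota -?[X in _ < X](size_iota 0 (n - k)) // add0n => mT.
  exact: leq_trans mT (tableau_row_mono tabT ak lcb bN).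
rewrite leqNgt; apply/negP => blc.
by have := before_find 0 blc; rewrite nth_iota // add0n mT.
Qed.

Lemma least_col_le_least_col a a' m m' : a < k -> a' < k ->
  (forall b, b < n - k -> m' <= T a' b -> m <= T a b) ->
  least_col T (n - k) a m <= least_col T (n - k) a' m'.
Proof.
move=> ak a'k impl; case: (ltnP (least_col T (n - k) a' m') (n - k)) => lcN.
  by rewrite least_col_leE //; apply: impl; rewrite // -least_col_leE.
exact: leq_trans (least_col_le_width T (n - k) a m) lcN.
Qed.

Lemma least_col_homo_row a a' m : a <= a' -> a' < k ->
  least_col T (n - k) a m <= least_col T (n - k) a' m.
Proof.
move=> aa' a'k; apply: least_col_le_least_col => //; first by lia.
by move=> b bN /leq_trans; apply; exact: (tableau_col_mono tabT aa' a'k bN).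
Qed.

Lemma least_col_homo_level a m m' : a < k -> m <= m' ->
  least_col T (n - k) a m <= least_col T (n - k) a m'.
Proof. by move=> ak mm'; apply: least_col_le_least_col => // b _; exact: leq_trans. Qed.

Lemma nth_nn_vec m a : a < k ->
  nth 0 (nn_vec T (n - k) k m) a = a.+1 + least_col T (n - k) a m.
Proof. by move=> ak; rewrite nth_mkseq. Qed.

Lemma nn_vec_inVstar m : 0 < k -> k < n -> 0 < m <= T 0 (n - k - 1) ->
  inVstar k n (nn_vec T (n - k) k m).
Proof.
move=> k_gt0 kn m_range; apply/andP; split.
  apply/inV_nth; split; first by rewrite size_mkseq.
    move=> i j ij jk; rewrite !nth_nn_vec ?(ltn_trans ij) //.
    have := least_col_homo_row m (ltnW ij) jk; lia.
  by move=> i ik; rewrite nth_nn_vec //; have := least_col_le_width T (n - k) i m; lia.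
apply/negP => /eqP /(congr1 (nth 0 ^~ 0)); rewrite /= nth_nn_vec // nth_iota //.
have lastN : n - k - 1 < n - k by lia.
have := least_col_leE m k_gt0 lastN; rewrite (_ : m <= _ = true); last by lia.
lia.
Qed.

Lemma nn_vec_leq_cw m m' : m <= m' -> leq_cw k (nn_vec T (n - k) k m) (nn_vec T (n - k) k m').
Proof.
move=> mm'; apply/leq_cwP => a ak; rewrite !nth_nn_vec // leq_add2l.
exact: least_col_homo_level.
Qed.

End Nonnesting.

Lemma leq_cw_nonnesting k I J : leq_cw k I J || leq_cw k J I -> nonnesting k I J.
Proof.
move=> /orP [] /leq_cwP le_a a b ab bk; rewrite /arcs_nest;
  have := le_a a (ltn_trans ab bk); have := le_a b bk; lia.
Qed.

Lemma nonnesting_leq_cw k n I J : inV k n I -> inV k n J ->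
  nonnesting k I J -> leq_cw k I J || leq_cw k J I.
Proof.
move=> /inV_nth [_ incrI _] /inV_nth [_ incrJ _] nnIJ.
apply/negPn/negP; rewrite negb_or => /andP [/allPn [a + +] /allPn [b + +]].
rewrite !mem_iota !add0n /= -!ltnNge => ak JIa bk IJb.
case: (ltngtP a b) => [ab | ba | eab]; last by subst; lia.
  have := nnIJ a b ab bk; have := incrI a b ab bk; have := incrJ a b ab bk.
  by rewrite /arcs_nest; lia.
have := nnIJ b a ba ak; have := incrI b a ba ak; have := incrJ b a ba ak.
by rewrite /arcs_nest; lia.
Qed.

Lemma phiNN_represents k n T : 0 < k -> k < n -> is_tableau k n T ->
  represents (nonnesting k) k n T (phiNN T k n).
Proof.
move=> k_gt0 kn tabT; split.
- apply/allP => I /mapP [m]; rewrite mem_iota => m_range ->.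
  apply: nn_vec_inVstar => //; lia.
- move=> I J /mapP [m _ ->] /mapP [m' _ ->]; apply: leq_cw_nonnesting.
  case: (leqP m m') => [mm' | /ltnW m'm]; first by rewrite nn_vec_leq_cw.
  by rewrite (nn_vec_leq_cw tabT m'm) orbT.
- move=> a b ak bN; rewrite /summing_tableau count_map.
  rewrite -[RHS](count_leq_iota1 (tableau_le_corner tabT ak bN)).
  by apply: eq_count => m /=; rewrite nth_nn_vec // -(least_col_leE tabT m ak bN); lia.
Qed.

Lemma sorted_represents_nth R k n T S j a : is_tableau k n T ->
  represents R k n T S -> sorted (leq_cw k) S -> j < size S -> a < k ->
  nth 0 (nth [::] S j) a = a.+1 + least_col T (n - k) a j.+1.
Proof.
move=> tabT repS sortS jS ak; have [/allP inS _ sumS] := repS.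
have /andP [VSj _] := inS _ (mem_nth [::] jS).
set x := nth 0 (nth [::] S j) a.
have := inV_nth_bounds VSj ak; rewrite -/x => x_range.
suff : x - a.+1 = least_col T (n - k) a j.+1 by lia.
apply: (@eq_of_leq_thresholds _ _ (n - k)); [lia | exact: least_col_le_width |] => b bN.
rewrite (least_col_leE tabT _ ak bN) -sumS // (_ : (x - a.+1 <= b) = (x <= a + b + 1)); last by lia.
rewrite /x -(nth_map [::] 0 (fun I => nth 0 I a) jS) sorted_nth_leq_count ?size_map //.
  by rewrite count_map.
by rewrite sorted_map; apply: sub_sorted sortS => I J /leq_cwP; apply.
Qed.

Lemma phiNN_unique k n T L : 0 < k -> k < n -> is_tableau k n T ->
  represents (nonnesting k) k n T L -> perm_eq (phiNN T k n) L.
Proof.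
move=> k_gt0 kn tabT repL; have [/allP inL nnL _] := repL.
have VL I : I \in L -> inV k n I by case/inL/andP.
have sortL : perm_eq L (sort (leq_cw k) L) by rewrite perm_sym perm_sort.
have repS := represents_perm sortL repL.
suff -> : phiNN T k n = sort (leq_cw k) L by rewrite perm_sym.
have sizeS : size (sort (leq_cw k) L) = T 0 (n - k - 1).
  by rewrite -(perm_size sortL) (size_represents repL).
apply: (@eq_from_nth _ [::]); first by rewrite size_map size_iota.
rewrite size_map size_iota => j jT.
rewrite (nth_map 0) ?size_iota // nth_iota // add1n.
have jS : j < size (sort (leq_cw k) L) by rewrite sizeS.
have /VL VSj : nth [::] (sort (leq_cw k) L) j \in L by rewrite (perm_mem sortL) mem_nth.
apply: (@eq_from_nth _ 0); first by rewrite size_mkseq; case/inV_nth: VSj.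
rewrite size_mkseq => a ak; rewrite nth_mkseq // (sorted_represents_nth tabT repS) //.
apply: (sort_sorted_in (P := mem L)); last by apply/allP.
by move=> I J IL JL; apply: nonnesting_leq_cw (VL _ IL) (VL _ JL) (nnL _ _ IL JL).
Qed.

(** * Compatible matchings *)

Definition colex_lt (K : nat) (I J : seq nat) : Prop :=
  exists a, [/\ a < K, (forall l, a < l -> l < K -> nth 0 I l = nth 0 J l)
              & nth 0 I a < nth 0 J a].

(* For increasing vectors this says that the arcs [(i_a, i_K)] and
   [(j_a, j_K)] do not cross, [a] being the last position where the first
   [K] entries differ; stated with [j_{K-1}] it no longer depends on [a]. *)
Definition compatible (K : nat) (I J : seq nat) : Prop :=
  colex_lt K I J -> nth 0 I K <= nth 0 J K.-1 \/ nth 0 J K <= nth 0 I K.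

Definition pairwise_compatible (K : nat) (L : seq (seq nat)) : Prop :=
  forall I J, I \in L -> J \in L -> compatible K I J.

Definition tail_incr (K : nat) (L : seq (seq nat)) : Prop :=
  forall I, I \in L -> size I = K.+1 /\ nth 0 I K.-1 < nth 0 I K.

Definition hall_condition (K : nat) (A : seq nat) (P : seq (seq nat)) : Prop :=
  forall v, count (fun x => x <= v) A <= count (fun p => nth 0 p K.-1 < v) P.

Section ColexOrder.

Variable K : nat.

Lemma colex_lt_irr I : ~ colex_lt K I I.
Proof. by case=> a [_ _]; rewrite ltnn. Qed.

Lemma colex_lt_trans I J L : colex_lt K I J -> colex_lt K J L -> colex_lt K I L.
Proof.
case=> a [aK IJ IJa] [b [bK JL JLb]].
case: (ltngtP a b) => [ab | ba | eab].
- exists b; split => // [l bl lK|]; last by rewrite IJ.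
  by rewrite IJ ?JL //; lia.
- exists a; split => // [l al lK|]; last by rewrite -(JL a).
  by rewrite IJ ?JL //; lia.
- subst b; exists a; split => // [l al lK|]; first by rewrite IJ ?JL.
  exact: ltn_trans IJa JLb.
Qed.

Lemma colex_lt_prefix I J I' J' : (forall l, l < K -> nth 0 I l = nth 0 I' l) ->
  (forall l, l < K -> nth 0 J l = nth 0 J' l) -> colex_lt K I J -> colex_lt K I' J'.
Proof.
move=> II' JJ' [a [aK IJ IJa]]; exists a; split => // [l al lK|]; last by rewrite -II' // -JJ'.
by rewrite -II' // -JJ' // IJ.
Qed.

Lemma colex_lt_take I J : colex_lt K I J -> colex_lt K (take K I) (take K J).
Proof. by apply: colex_lt_prefix => l lK; rewrite nth_take. Qed.

Lemma colex_lt_total I J :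
  [\/ colex_lt K I J, colex_lt K J I | forall l, l < K -> nth 0 I l = nth 0 J l].
Proof.
suff agree_from j : j <= K -> (forall l, K - j <= l -> l < K -> nth 0 I l = nth 0 J l)
    \/ colex_lt K I J \/ colex_lt K J I.
  have [agree | [IJ | JI]] := agree_from K (leqnn K);
    [apply: Or33 | apply: Or31 | apply: Or32] => //.
  by move=> l; apply: agree; rewrite subnn.
elim: j => [|j IH] jK; first by left => l; lia.
have [agree | ] := IH (ltnW jK); last by right.
have aK : K - j.+1 < K by lia.
case: (ltngtP (nth 0 I (K - j.+1)) (nth 0 J (K - j.+1))) => [IJ | JI | eIJ].
- by right; left; exists (K - j.+1); split => // l al lK; apply: agree; lia.
- by right; right; exists (K - j.+1); split => // l al lK; rewrite agree //; lia.
- left => l al lK; case: (ltnP l (K - j)) => lj; last exact: agree.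
  by rewrite (_ : l = K - j.+1) //; lia.
Qed.

Lemma colex_lt_dec I J : colex_lt K I J \/ ~ colex_lt K I J.
Proof.
have [IJ | JI | agree] := colex_lt_total I J; [by left | right => IJ..].
  exact: colex_lt_irr (colex_lt_trans IJ JI).
by apply: (@colex_lt_irr J); apply: colex_lt_prefix IJ.
Qed.

Lemma exists_colex_max (s : seq (seq nat)) x0 : x0 \in s ->
  exists2 x, x \in s & forall y, y \in s -> ~ colex_lt K x y.
Proof.
by apply: exists_maximal; [exact: colex_lt_irr | exact: colex_lt_trans | exact: colex_lt_dec].
Qed.

End ColexOrder.

Section Matching.

Variable K : nat.

(* With [m] the least last entry, the pivot [J] is the colex-largest prefix
   that can still be followed by [m]; compatibility forces [rcons J m] into [L]. *)
Lemma rcons_pivot_mem L m J : 0 < K ->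
  tail_incr K L -> pairwise_compatible K L ->
  (forall I, I \in L -> m <= nth 0 I K) -> (exists2 I0, I0 \in L & nth 0 I0 K = m) ->
  J \in map (take K) L -> nth 0 J K.-1 < m ->
  (forall p, p \in map (take K) L -> nth 0 p K.-1 < m -> ~ colex_lt K J p) ->
  rcons J m \in L.
Proof.
move=> K_gt0 incrL compL m_min [I0 I0L I0m] /mapP [J1 J1L ->].
have [sI0 incrI0] := incrL _ I0L; have [sJ1 incrJ1] := incrL _ J1L.
have penK : K.-1 < K by lia.
rewrite nth_take // => J1m J1_max.
have [J1m' | m_lt] := eqVneq (nth 0 J1 K) m; first by rewrite -J1m' rcons_take_nth.
have {}m_lt : m < nth 0 J1 K by have := m_min _ J1L; rewrite leq_eqVlt eq_sym (negbTE m_lt).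
have [I0J1 | J1I0 | agree] := colex_lt_total K I0 J1.
- by case: (compL _ _ I0L J1L I0J1); lia.
- case: (J1_max (take K I0)); rewrite ?map_f ?nth_take //; first by lia.
  exact: colex_lt_take.
- have -> : take K J1 = take K I0.
    apply: (@eq_from_nth _ 0) => [|l]; first by rewrite !size_takel ?sI0 ?sJ1.
    by rewrite size_takel ?sJ1 // => lK; rewrite !nth_take // agree.
  by rewrite -I0m rcons_take_nth.
Qed.

Lemma exists_pivot (P : seq (seq nat)) m p0 : p0 \in P -> nth 0 p0 K.-1 < m ->
  exists2 J, J \in P & nth 0 J K.-1 < m /\
    forall p, p \in P -> nth 0 p K.-1 < m -> ~ colex_lt K J p.
Proof.
move=> p0P p0m; have p0S : p0 \in [seq p <- P | nth 0 p K.-1 < m] by rewrite mem_filter p0m.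
have [J] := exists_colex_max K p0S; rewrite mem_filter => /andP [Jm JP] J_max.
by exists J => //; split=> // p pP pm; apply: J_max; rewrite mem_filter pm.
Qed.

Lemma tail_incr_rem L X : tail_incr K L -> tail_incr K (rem X L).
Proof. by move=> incrL I /mem_rem /incrL. Qed.

Lemma pairwise_compatible_rem L X : pairwise_compatible K L -> pairwise_compatible K (rem X L).
Proof. by move=> compL I J /mem_rem IL /mem_rem JL; exact: compL. Qed.

Lemma matching_unique L L' : 0 < K ->
  tail_incr K L -> tail_incr K L' -> pairwise_compatible K L -> pairwise_compatible K L' ->
  perm_eq (map (take K) L) (map (take K) L') ->
  perm_eq (map (nth 0 ^~ K) L) (map (nth 0 ^~ K) L') -> perm_eq L L'.
Proof.
move=> K_gt0; move sL: (size L) => s.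
elim: s L L' sL => [|s IH] L L' sL incrL incrL' compL compL' eq_pre eq_last.
  move/size0nil: sL (perm_size eq_pre) => -> /=.
  by rewrite size_map => /esym/size0nil ->.
have x0L : nth [::] L 0 \in L by rewrite mem_nth ?sL.
have [I0 I0L m_min] := exists_argmin (nth 0 ^~ K) x0L.
set m := nth 0 I0 K.
have last_mem I : I \in L' -> nth 0 I K \in map (nth 0 ^~ K) L.
  by move=> IL'; rewrite (perm_mem eq_last); apply: map_f.
have m_min' I : I \in L' -> m <= nth 0 I K by case/last_mem/mapP => I2 /m_min + ->.
have I0'_ex : exists2 I0', I0' \in L' & nth 0 I0' K = m.
  have /mapP [I0' ? ->] : m \in map (nth 0 ^~ K) L' by rewrite -(perm_mem eq_last); apply: map_f.
  by exists I0'.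
have I0m : nth 0 (take K I0) K.-1 < m by rewrite nth_take; [case: (incrL _ I0L) | lia].
have [J JL [Jm J_max']] := exists_pivot (map_f (take K) I0L) I0m.
have XL := rcons_pivot_mem K_gt0 incrL compL m_min (ex_intro2 _ _ I0 I0L erefl) JL Jm J_max'.
have JL' : J \in map (take K) L' by rewrite -(perm_mem eq_pre).
have J_max'' p : p \in map (take K) L' -> nth 0 p K.-1 < m -> ~ colex_lt K J p.
  by rewrite -(perm_mem eq_pre); exact: J_max'.
have XL' := rcons_pivot_mem K_gt0 incrL' compL' m_min' I0'_ex JL' Jm J_max''.
apply: perm_trans (perm_to_rem XL) (perm_cons_rem XL' _).
apply: IH; rewrite ?size_rem ?sL ?perm_map_rem //;
  by [apply: tail_incr_rem | apply: pairwise_compatible_rem].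
Qed.

Lemma hall_condition_rem A P m J : m \in A -> J \in P -> (forall x, x \in A -> m <= x) ->
  nth 0 J K.-1 < m -> hall_condition K A P -> hall_condition K (rem m A) (rem J P).
Proof.
move=> mA JP m_min Jm hall v; rewrite !count_rem mA JP /=.
have [mv | vm] := leqP m v.
  have -> : nth 0 J K.-1 < v by lia.
  exact: leq_sub2r (hall v).
rewrite (_ : count _ A = 0) //; apply/eqP; rewrite -leqn0 leqNgt -has_count.
by apply/hasPn => x /m_min /=; lia.
Qed.

Lemma pairwise_compatible_pivot L J m : size J = K -> pairwise_compatible K L ->
  (forall I, I \in L -> m <= nth 0 I K) ->
  (forall I, I \in L -> nth 0 I K.-1 < m -> ~ colex_lt K J I) ->
  pairwise_compatible K (rcons J m :: L).
Proof.
move=> sJ compL m_min J_max; have XK : nth 0 (rcons J m) K = m by rewrite nth_rcons sJ ltnn eqxx.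
move=> I I'; rewrite !inE => /orP [/eqP -> | IL] /orP [/eqP -> | I'L].
- by move/colex_lt_irr.
- move=> XI'; left; rewrite XK leqNgt; apply/negP => I'm; apply: (J_max I' I'L I'm).
  by apply: colex_lt_prefix XI' => // l lK; rewrite nth_rcons sJ lK.
- by move=> _; right; rewrite XK; exact: m_min.
- exact: compL.
Qed.

Lemma matching_exists (A : seq nat) (P : seq (seq nat)) : 0 < K ->
  size A = size P -> (forall p, p \in P -> size p = K) -> hall_condition K A P ->
  exists L, [/\ perm_eq (map (take K) L) P, perm_eq (map (nth 0 ^~ K) L) A,
             tail_incr K L & pairwise_compatible K L].
Proof.
move=> K_gt0; move sA: (size A) => s.
elim: s A P sA => [|s IH] A P sA sAP sP hall.
  exists [::]; move/size0nil: sA sAP => -> /esym/size0nil ->.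
  by split=> // I J; rewrite in_nil.
have x0A : nth 0 A 0 \in A by rewrite mem_nth ?sA.
have [m mA m_min] := exists_argmin id x0A.
have [p0 p0P p0m] : exists2 p0, p0 \in P & nth 0 p0 K.-1 < m.
  apply/hasP; rewrite has_count; apply: leq_trans (hall m).
  by rewrite -has_count; apply/hasP; exists m.
have [J JP [Jm J_max]] := exists_pivot p0P p0m.
have [L0 [pre0 last0 incr0 comp0]] : exists L, [/\ perm_eq (map (take K) L) (rem J P),
    perm_eq (map (nth 0 ^~ K) L) (rem m A), tail_incr K L & pairwise_compatible K L].
  apply: IH; rewrite ?size_rem ?sA -?sAP //; first by move=> p /mem_rem /sP.
  exact: hall_condition_rem.
have sJ := sP _ JP.
have L0_pre I : I \in L0 -> take K I \in P.
  by move=> IL0; apply: (mem_rem (x := J)); rewrite -(perm_mem pre0); apply: map_f.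
exists (rcons J m :: L0); split.
- by rewrite /= -cats1 take_size_cat //; exact: perm_cons_rem.
- by rewrite /= nth_rcons sJ ltnn eqxx; exact: perm_cons_rem.
- move=> I; rewrite inE => /orP [/eqP -> | /incr0 //].
  by rewrite size_rcons sJ !nth_rcons sJ ltnn eqxx (_ : K.-1 < K) //; lia.
apply: pairwise_compatible_pivot => // [I IL0 | I IL0 Im JI].
  apply: m_min; apply: (mem_rem (x := m)).
  by rewrite -(perm_mem last0); apply: (map_f (nth 0 ^~ K)).
apply: (J_max (take K I)); rewrite ?L0_pre ?nth_take //; first by lia.
by apply: colex_lt_prefix JI => l lK; rewrite ?nth_take.
Qed.

End Matching.

(** * The noncrossing representation *)

Section Truncation.

Variables (K n : nat).

Lemma noncrossing_compatible I J : inV K.+1 n J -> noncrossing K.+1 I J -> compatible K I J.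
Proof.
move=> /inV_nth [_ incrJ _] ncIJ [a [aK agree IJa]].
case: (leqP (nth 0 I K) (nth 0 J K.-1)) => [| JI]; first by left.
case: (leqP (nth 0 J K) (nth 0 I K)) => [| IJ]; first by right.
have := ncIJ a K aK (ltnSn K) agree; rewrite /arcs_cross.
case: (ltnP a K.-1) => [aK' | Ka]; last by move: IJa; rewrite (_ : a = K.-1); lia.
by have := incrJ a K.-1 aK' ltac:(lia); lia.
Qed.

Lemma noncrossing_take I J : noncrossing K.+1 I J -> noncrossing K (take K I) (take K J).
Proof.
move=> ncIJ a b ab bK agree; rewrite !nth_take ?(ltn_trans ab) //.
apply: ncIJ => // [|l al lb]; first by lia.
by have := agree l al lb; rewrite !nth_take //; lia.
Qed.

Lemma noncrossing_rcons I J : noncrossing K (take K I) (take K J) ->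
  compatible K I J -> compatible K J I ->
  nth 0 I K.-1 < nth 0 I K -> nth 0 J K.-1 < nth 0 J K -> noncrossing K.+1 I J.
Proof.
move=> ncIJ compIJ compJI incrI incrJ a b ab bK agree; have aK : a < K by lia.
case: (ltnP b K) => [bK' | Kb].
  have := ncIJ a b ab bK'; rewrite !nth_take ?(ltn_trans ab) //; apply=> l al lb.
  by rewrite !nth_take ?agree //; lia.
have eb : b = K by lia.
subst b.
have agree_pen : a < K.-1 -> nth 0 I K.-1 = nth 0 J K.-1 by move=> aK'; apply: agree; lia.
rewrite /arcs_cross; case: (ltngtP (nth 0 I a) (nth 0 J a)) => [IJa | JIa | ->]; last by lia.
- case: (compIJ (ex_intro _ a (And3 aK agree IJa))) => last_le; last by lia.
  by case: (ltnP a K.-1) => [/agree_pen | ?]; [| rewrite (_ : a = K.-1) //]; lia.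
- have agree' l : a < l -> l < K -> nth 0 J l = nth 0 I l by move=> al lK; rewrite agree.
  case: (compJI (ex_intro _ a (And3 aK agree' JIa))) => last_le; last by lia.
  by case: (ltnP a K.-1) => [/agree_pen | ?]; [| rewrite (_ : a = K.-1) //]; lia.
Qed.

Lemma inVstar_take I : 0 < K -> inVstar K.+1 n I -> inVstar K (n - 1) (take K I).
Proof.
move=> K_gt0 /andP [VI notmax]; have [sI incrI rangeI] := (inV_nth _ _ _).1 VI.
have := inV_nth_bounds VI (ltnSn K) => lastI.
apply/andP; split.
  apply/inV_nth; split; first by rewrite size_takel // sI.
    by move=> i j ij jK; rewrite !nth_take ?(ltn_trans ij) //; apply: incrI; lia.
  move=> i iK; rewrite nth_take //; have := rangeI i ltac:(lia).
  by have := incrI i K iK (ltnSn K); have := rangeI K (ltnSn K); lia.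
apply: contra notmax => /eqP max_take; apply/eqP/(@eq_from_nth _ 0).
  by rewrite sI size_iota.
rewrite sI => i iK; rewrite nth_iota //.
have penK : K.-1 < K by lia.
have := nth_take 0 penK I; rewrite max_take nth_iota // => Ipen.
case: (ltnP i K) => [iK' | Ki].
  by have := nth_take 0 iK' I; rewrite max_take nth_iota //; lia.
by rewrite (_ : i = K); [have := incrI K.-1 K penK (ltnSn K); lia | lia].
Qed.

Lemma inVstar_rcons I : 0 < K -> inVstar K (n - 1) (take K I) -> size I = K.+1 ->
  nth 0 I K.-1 < nth 0 I K -> nth 0 I K <= n -> inVstar K.+1 n I.
Proof.
move=> K_gt0 /andP [Vtake notmax] sI incr_last last_n.
have [_ incrT rangeT] := (inV_nth _ _ _).1 Vtake.
have penK : K.-1 < K by lia.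
have eq_take i : i < K -> nth 0 (take K I) i = nth 0 I i by move=> iK; rewrite nth_take.
have le_pen i : i < K -> nth 0 I i <= nth 0 I K.-1.
  move=> iK; case: (ltnP i K.-1) => [ipen | ?]; last by rewrite (_ : i = K.-1) //; lia.
  by have := incrT i K.-1 ipen penK; rewrite !eq_take //; lia.
apply/andP; split.
  apply/inV_nth; split => // [i j ij jK | i iK].
    case: (ltnP j K) => [jK' | ?]; first by have := incrT i j ij jK'; rewrite !eq_take //; lia.
    by rewrite (_ : j = K); [have := le_pen i ltac:(lia); lia | lia].
  case: (ltnP i K) => [iK' | ?]; first by have := rangeT i iK'; rewrite eq_take //; lia.
  by rewrite (_ : i = K); [have := rangeT K.-1 penK; rewrite eq_take //; lia | lia].
apply: contra notmax => /eqP ->.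
by rewrite take_iota; apply/eqP; congr iota; lia.
Qed.

End Truncation.

Lemma is_tableau_top K n T : is_tableau K.+1 n T -> is_tableau K (n - 1) T.
Proof.
case=> rowT colT; split=> a b ak bN; [apply: rowT | apply: colT]; lia.
Qed.

Lemma represents_take K n T L : 0 < K -> represents (noncrossing K.+1) K.+1 n T L ->
  represents (noncrossing K) K (n - 1) T (map (take K) L).
Proof.
move=> K_gt0 [/allP inL ncL sumL]; split.
- by apply/allP => _ /mapP [I /inL VI ->]; exact: (inVstar_take K_gt0 VI).
- by move=> _ _ /mapP [I IL ->] /mapP [J JL ->]; exact: (noncrossing_take (ncL _ _ IL JL)).
- move=> a b aK bN; rewrite -sumL; try lia.
  by rewrite /summing_tableau count_map; apply: eq_count => I /=; rewrite nth_take.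
Qed.

Lemma represents_tail_incr R K n T L : 0 < K -> represents R K.+1 n T L -> tail_incr K L.
Proof.
move=> K_gt0 [/allP inL _ _] I /inL /andP [/inV_nth [sI incrI _] _]; split=> //.
by apply: incrI; lia.
Qed.

Lemma represents_compatible K n T L : represents (noncrossing K.+1) K.+1 n T L ->
  pairwise_compatible K L.
Proof.
case=> /allP inL ncL _ I J IL JL; have /andP [VJ _] := inL J JL.
exact: (noncrossing_compatible VJ (ncL I J IL JL)).
Qed.

Lemma represents_hall_condition R R' K n T C P : 0 < K -> K.+1 < n -> is_tableau K.+1 n T ->
  represents R K.+1 n T C -> represents R' K (n - 1) T P ->
  hall_condition K (map (nth 0 ^~ K) C) P.
Proof.
move=> K_gt0 Kn tabT repC repP [|v]; rewrite count_map (represents_count_nth_le repC) //.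
rewrite (@eq_count _ _ (fun p => nth 0 p K.-1 <= v)) // (represents_count_nth_le repP); try lia.
rewrite (size_represents repC) // (size_represents repP) ?is_tableau_top //; try lia.
rewrite /row_count (_ : n - 1 - K = n - K.+1); last by lia.
case: ifP => [|vK]; first by lia.
rewrite (_ : (v <= K.-1) = false); last by lia.
rewrite (_ : v - K.-1.+1 = v.+1 - K.+1); last by lia.
case: ifP => // bN; exact: (tableau_col_mono tabT (leq_pred K) (ltnSn K) bN).
Qed.

Lemma represents_rcons R K n T C P L : 0 < K -> represents R K.+1 n T C ->
  represents (noncrossing K) K (n - 1) T P ->
  perm_eq (map (take K) L) P -> perm_eq (map (nth 0 ^~ K) L) (map (nth 0 ^~ K) C) ->
  tail_incr K L -> pairwise_compatible K L -> represents (noncrossing K.+1) K.+1 n T L.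
Proof.
move=> K_gt0 [/allP inC _ sumC] [/allP inP ncP sumP] preL lastL incrL compL.
have take_mem I : I \in L -> take K I \in P.
  by move=> IL; rewrite -(perm_mem preL); apply: map_f.
split.
- apply/allP => I IL; have [sI incrI] := incrL I IL.
  apply: (inVstar_rcons K_gt0 (inP _ (take_mem _ IL)) sI incrI).
  have : nth 0 I K \in map (nth 0 ^~ K) C by rewrite -(perm_mem lastL); apply: map_f.
  by case/mapP => J /inC /andP [/inV_nth [_ _ rangeJ] _] ->; case/andP: (rangeJ K (ltnSn K)).
- move=> I J IL JL; have [_ incrI] := incrL I IL; have [_ incrJ] := incrL J JL.
  apply: (noncrossing_rcons _ (compL I J IL JL) (compL J I JL IL) incrI incrJ).
  exact: (ncP _ _ (take_mem _ IL) (take_mem _ JL)).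
- move=> a b aK bN; case: (ltnP a K) => [aK' | Ka].
    rewrite -sumP /summing_tableau -?(permP preL) ?count_map; try lia.
    by apply: eq_count => I /=; rewrite nth_take.
  rewrite (_ : a = K) -?sumC /summing_tableau; try lia.
  by have := permP lastL (fun x => x <= K + b + 1); rewrite !count_map.
Qed.

Lemma phiNC_exists_unique k n T : 0 < k -> k < n -> is_tableau k n T ->
  exists_unique_multiset (represents (noncrossing k) k n T).
Proof.
elim: k n T => [//|K IH] n T _ Kn tabT.
have [K0 | K_gt0] := posnP K.
  subst K.
  have nc1 I J : noncrossing 1 I J by move=> a b ab b1; lia.
  have nn1 I J : nonnesting 1 I J by move=> a b ab b1; lia.
  have rep1 L : represents (noncrossing 1) 1 n T L <-> represents (nonnesting 1) 1 n T L.
    by split=> -[inL _ sumL]; split.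
  exists (phiNN T 1 n); split => [|L /rep1]; last exact: (phiNN_unique (ltnSn 0) Kn tabT).
  by apply/rep1; exact: (phiNN_represents (ltnSn 0) Kn tabT).
have [P [repP P_uniq]] := IH (n - 1) T K_gt0 ltac:(lia) (is_tableau_top tabT).
have repC := phiNN_represents (ltn0Sn K) Kn tabT.
have sizeCP : size (map (nth 0 ^~ K) (phiNN T K.+1 n)) = size P.
  by rewrite size_map (size_represents repC) // (size_represents repP) //; [congr T | ]; lia.
have sizeP p : p \in P -> size p = K.
  by case: repP => /allP inP _ _ /inP /andP [/inV_nth []].
have [L [preL lastL incrL compL]] :=
  matching_exists K_gt0 sizeCP sizeP (represents_hall_condition K_gt0 Kn tabT repC repP).
have repL := represents_rcons K_gt0 repC repP preL lastL incrL compL.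
exists L; split => // L' repL'.
apply: (matching_unique K_gt0) => //.
- exact: (represents_tail_incr K_gt0 repL').
- exact: (represents_compatible repL').
- exact: (perm_trans preL (P_uniq _ (represents_take K_gt0 repL'))).
- exact: (represents_nth_perm (ltn0Sn K) Kn (ltnSn K) repL repL').
Qed.

Theorem theorem2p3 (k n : nat) (T : nat -> nat -> nat) :
  1 <= k -> k <= n - 1 -> is_tableau k n T ->
  exists_unique_multiset (represents (nonnesting k) k n T) /\
  exists_unique_multiset (represents (noncrossing k) k n T).
Proof.
move=> k_gt0 kn tabT; have {}kn : k < n by lia.
split; last exact: phiNC_exists_unique.
by exists (phiNN T k n); split; [exact: phiNN_represents | move=> L; exact: phiNN_unique].
Qed.
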